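(* Let $Y$ be a real random variable and $\mathbf X=(X_1,\dots,X_p)^\top$ a random vector in $\mathbb R^p$. Let $J\subset\{1,\dots,p\}$ be a set of indices, $\mathbf X_J=(X_j)_{j\in J}$ and $\mathbf X_{\bar J}=(X_j)_{j\notin J}$. Assume the additive regression model $$Y = f_J(\mathbf X_J)+f_{\bar J}(\mathbf X_{\bar J})+\varepsilon,$$ where $f_J,f_{\bar J}$ are measurable functions with $\mathbb E[f_J(\mathbf X_J)^2]<\infty$ and $\mathbb E[f_{\bar J}(\mathbf X_{\bar J})^2]<\infty$, and $\varepsilon$ is a random variable with $\mathbb E[\varepsilon\mid\mathbf X]=0$ and $\mathbb E[\varepsilon^2\mid \mathbf X]$ finite. Then the grouped variable importance of $\mathbf X_J$ satisfies $$\mathcal I(\mathbf X_J)=2\,\mathrm{Var}\big[f_J(\mathbf X_J)\big].$$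
   Context: Let $f(\mathbf x)=\mathbb E[Y\mid \mathbf X=\mathbf x]$ be the regression function (here $f(\mathbf x)=f_J(\mathbf x_J)+f_{\bar J}(\mathbf x_{\bar J})$). For a set of indices $J=\{j_1<\dots<j_k\}\subset\{1,\dots,p\}$, let $\mathbf X'_J=(X'_{j_1},\dots,X'_{j_k})^\top$ be a random vector with the same distribution as $\mathbf X_J$, independent of $(\mathbf X,Y)$ (so independent of $Y$ and of all predictors), and let $\mathbf X_{(J)}$ be the vector obtained from $\mathbf X$ by replacing each coordinate $X_{j}$, $j\in J$, by $X'_{j}$. The grouped (permutation) variable importance of $\mathbf X_J$ is $$\mathcal I(\mathbf X_J):=\mathbb E\big[(Y-f(\mathbf X_{(J)}))^2\big]-\mathbb E\big[(Y-f(\mathbf X))^2\big].$$ For a single index $j$, $\mathcal I(X_j)$ denotes $\mathcal I(\mathbf X_{\{j\}})$. *)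

From HB Require Import structures.
From mathcomp Require Import all_boot all_order all_algebra.
From mathcomp Require Import all_classical all_reals all_analysis.
Set Implicit Arguments. Unset Strict Implicit. Unset Printing Implicit Defensive.
Import Order.TTheory GRing.Theory Num.Theory.
Local Open Scope classical_set_scope.
Local Open Scope ring_scope.

(* Points of R^p are p.-tuples (product sigma-algebra on p.-tuple R). *)

(* x_J = (x_j)_{j in J}, listed in increasing order of j (enum order of 'I_p). *)
Definition restr (R : Type) (p : nat) (J : {set 'I_p}) (x : p.-tuple R)
  : #|J|.-tuple R :=
  [tuple tnth x (enum_val i) | i < #|J|].

Definition replace (R : Type) (p : nat) (J : {set 'I_p}) (x x' : p.-tuple R)
  : p.-tuple R :=
  [tuple if i \in J then tnth x' i else tnth x i | i < p].

(* Grouped permutation importance of X_J for the regression function f,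
   where X' is a random vector whose J-coordinates form the independent copy
   X'_J (its other coordinates are never used):
   I(X_J) = E[(Y - f(X_(J)))^2] - E[(Y - f(X))^2]. *)
Definition grouped_importance (R : realType) (d : measure_display)
  (T : measurableType d) (P : probability T R) (p : nat) (J : {set 'I_p})
  (f : p.-tuple R -> R) (X X' : T -> p.-tuple R) (Y : T -> R) : \bar R :=
  (\int[P]_t ((Y t - f (replace J (X t) (X' t))) ^+ 2)%:E
   - \int[P]_t ((Y t - f (X t)) ^+ 2)%:E)%E.

From HB Require Import structures.
From mathcomp Require Import all_boot all_order all_algebra.
From mathcomp Require Import all_classical all_reals all_analysis.
From mathcomp Require Import measurable_realfun ring.
Import Order.TTheory GRing.Theory Num.Theory.
Set Implicit Arguments. Unset Strict Implicit.
Local Open Scope classical_set_scope.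
Local Open Scope ring_scope.

(* Write A = f_J(X_J), A' = f_J(X'_J).  Resampling only touches the J-part of
   f, so the two residuals are Y - f(X_(J)) = A - A' + eps and Y - f(X) = eps,
   both centred; hence I(X_J) = Var(A - A' + eps) - Var eps
   = Var A + Var A' - 2 Cov(A', A) + 2 Cov(A, eps) - 2 Cov(A', eps).
   Equality in law gives Var A' = Var A, independence of X'_J from (X, Y)
   kills Cov(A', A) and Cov(A', eps) (eps is a function of (X, Y)), and
   E[eps | X] = 0 kills Cov(A, eps), leaving 2 Var A.
   The measure theory behind both vanishing statements is one transfer
   principle: if B |-> \int_(Z^-1 B) h and B |-> \int_(Z'^-1 B) h' agree, then
   so do \int g(Z) h and \int g(Z') h' for every nonnegative measurable g
   (approximate g by simple functions); signed integrands are then handled by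
   splitting into positive and negative parts. *)

Lemma restr_replace (R : Type) (p : nat) (J : {set 'I_p}) (x x' : p.-tuple R) :
  restr J (replace J x x') = restr J x'.
Proof.
apply: eq_from_tnth => i; rewrite /restr /replace !tnth_mktuple.
by rewrite (enum_valP i).
Qed.

Lemma restrC_replace (R : Type) (p : nat) (J : {set 'I_p}) (x x' : p.-tuple R) :
  restr (~: J) (replace J x x') = restr (~: J) x.
Proof.
apply: eq_from_tnth => i; rewrite /restr /replace !tnth_mktuple.
by have := enum_valP i; rewrite inE => /negbTE ->.
Qed.

Lemma measurable_restr (R : realType) (p : nat) (J : {set 'I_p}) :
  measurable_fun setT (restr J : p.-tuple R -> #|J|.-tuple R).
Proof.
apply/measurable_fun_tnthP => i.
have -> : (@tnth _ R ^~ i \o restr J) = (@tnth _ R ^~ (enum_val i)).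
  by apply/funext => x /=; rewrite /restr tnth_mktuple.
exact: measurable_tnth.
Qed.

Lemma measurable_preimageT d d' (T : measurableType d) (U : measurableType d')
    (f : T -> U) (B : set U) :
  measurable_fun setT f -> measurable B -> measurable (f @^-1` B).
Proof. by move=> mf mB; rewrite -(setTI (_ @^-1` _)); exact: mf. Qed.

Section funrposneg.
Context (T : Type) (R : realDomainType).
Implicit Types u : T -> R.

Lemma funrposBnegE u t : u t = u^\+ t - u^\- t.
Proof. by rewrite -[in LHS](funrposBneg u). Qed.

Lemma funrpos_le_norm u t : `|u^\+ t| <= `|u t|.
Proof. by rewrite ger0_norm// ge_max normr_ge0 ler_norm. Qed.

Lemma funrneg_le_norm u t : `|u^\- t| <= `|u t|.
Proof. by rewrite ger0_norm// ge_max normr_ge0 -normrN ler_norm. Qed.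

End funrposneg.

Lemma fin_num_muleBB (R : realDomainType) (a b c e : \bar R) :
  a \is a fin_num -> b \is a fin_num -> c \is a fin_num -> e \is a fin_num ->
  ((a - b) * (c - e) = a * c + b * e - a * e - b * c)%E.
Proof.
case: a => // a _; case: b => // b _; case: c => // c _; case: e => // e _.
by congr EFin; ring.
Qed.

Section integral_funrposneg.
Context d (T : measurableType d) (R : realType) (mu : {measure set T -> \bar R}).
Local Open Scope ereal_scope.

Lemma integral_funrposneg D (u : T -> R) : measurable D ->
  mu.-integrable D (EFin \o u) ->
  \int[mu]_(t in D) (u t)%:E =
    \int[mu]_(t in D) (u^\+ t)%:E - \int[mu]_(t in D) (u^\- t)%:E.
Proof.
move=> mD iu; rewrite -integralB_EFin//.
- by apply: eq_integral => t _; rewrite [u t]funrposBnegE.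
- exact: integrable_funrpos.
- exact: integrable_funrneg.
Qed.

Lemma integrable_mul_le (u v u' v' : T -> R) :
  measurable_fun setT u' -> measurable_fun setT v' ->
  (forall t, `|u' t| <= `|u t|)%R -> (forall t, `|v' t| <= `|v t|)%R ->
  mu.-integrable setT (EFin \o (u \* v)%R) ->
  mu.-integrable setT (EFin \o (u' \* v')%R).
Proof.
move=> mu' mv' uu' vv' iuv; apply: le_integrable iuv => //.
  exact/measurable_EFinP/measurable_funM.
by move=> t _; rewrite !abse_EFin lee_fin !normrM ler_pM.
Qed.

Lemma integral_mul_funrposneg (u v : T -> R) :
  measurable_fun setT u -> measurable_fun setT v ->
  mu.-integrable setT (EFin \o (u \* v)%R) ->
  \int[mu]_t (u t * v t)%:E =
    \int[mu]_t (u^\+ t * v^\+ t)%:E + \int[mu]_t (u^\- t * v^\- t)%:E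
    - \int[mu]_t (u^\+ t * v^\- t)%:E - \int[mu]_t (u^\- t * v^\+ t)%:E.
Proof.
move=> mu_ mv iuv.
have mp := measurable_funrpos mu_; have mn := measurable_funrneg mu_.
have mvp := measurable_funrpos mv; have mvn := measurable_funrneg mv.
have ipp := integrable_mul_le mp mvp (funrpos_le_norm u) (funrpos_le_norm v) iuv.
have inn := integrable_mul_le mn mvn (funrneg_le_norm u) (funrneg_le_norm v) iuv.
have ipn := integrable_mul_le mp mvn (funrpos_le_norm u) (funrneg_le_norm v) iuv.
have inp := integrable_mul_le mn mvp (funrneg_le_norm u) (funrpos_le_norm v) iuv.
have ippnn := integrableD measurableT ipp inn.
rewrite -integralD_EFin// -!integralB_EFin//.
- apply: eq_integral => t _ /=; rewrite [u t]funrposBnegE [v t]funrposBnegE.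
  by congr EFin; ring.
- exact: (integrableB measurableT ippnn ipn).
Qed.

End integral_funrposneg.

Section weighted_law.
Context d (T : measurableType d) (R : realType) (mu : {measure set T -> \bar R}).
Context dS (S : measurableType dS).
Local Open Scope ereal_scope.
Import HBNNSimple.

Lemma integral_mul_indic (B : set T) (h : T -> R) :
  \int[mu]_(t in B) (h t)%:E = \int[mu]_t (\1_B t * h t)%:E.
Proof.
rewrite integral_mkcond; apply: eq_integral => t _.
by rewrite /patch indicE; case: ifPn => _; rewrite ?mul1r ?mul0r.
Qed.

Lemma integral_nnsfun_comp_mul (Z : T -> S) (h : T -> R) (s : {nnsfun S >-> R}) :
  measurable_fun setT Z -> measurable_fun setT h -> (forall t, 0 <= h t)%R ->
  \int[mu]_t (s (Z t) * h t)%:E =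
  \sum_(x \in range s) x%:E * \int[mu]_(t in Z @^-1` (s @^-1` [set x])) (h t)%:E.
Proof.
move=> mZ mh h0.
have mZs x : measurable (Z @^-1` (s @^-1` [set x])).
  exact/(measurable_preimageT mZ)/measurable_funPTI.
transitivity (\int[mu]_t (\sum_(x \in range s)
    (x * (\1_(Z @^-1` (s @^-1` [set x])) t * h t))%:E)).
  apply: eq_integral => t _; rewrite fsumEFin//; congr EFin.
  by rewrite fimfunE mulr_fsuml; apply: eq_fsbigr => x _; rewrite mulrA.
rewrite ge0_integral_fsum//; last 2 first.
- move=> x; apply/measurable_EFinP; apply: measurable_funM => //.
  by apply: measurable_funM => //; exact: measurable_indic.
- move=> x t _; rewrite lee_fin mulrA mulr_ge0//.
  by have := nnfun_muleindic_ge0 s x (Z t); rewrite -EFinM lee_fin.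
apply: eq_fsbigr => x /set_mem [y _ <-].
under eq_integral do rewrite EFinM.
rewrite ge0_integralZl_EFin// -?integral_mul_indic// => [t _|].
  by rewrite lee_fin mulr_ge0.
by apply/measurable_EFinP; apply: measurable_funM => //; exact: measurable_indic.
Qed.

Lemma ge0_integral_comp_mul_approx (Z : T -> S) (h : T -> R) (g : S -> R)
    (mg : measurable_fun setT (EFin \o g)) :
  measurable_fun setT Z -> measurable_fun setT h -> (forall t, 0 <= h t)%R ->
  (forall s, 0 <= g s)%R ->
  \int[mu]_t (g (Z t) * h t)%:E =
    limn (fun n => \int[mu]_t (nnsfun_approx measurableT mg n (Z t) * h t)%:E).
Proof.
move=> mZ mh h0 g0; rewrite -monotone_convergence//; last 3 first.
- by move=> n; apply/measurable_EFinP/measurable_funM => //; exact: measurableT_comp.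
- by move=> n t _; rewrite lee_fin mulr_ge0.
- by move=> t _ m n mn; rewrite lee_fin ler_wpM2r//; exact/lefP/nd_nnsfun_approx.
apply: eq_integral => t _; apply/esym/cvg_lim => //.
under eq_fun do rewrite EFinM.
rewrite EFinM; apply: cvgeM => //; last exact: cvg_cst.
by apply: cvg_nnsfun_approx => // x _; rewrite lee_fin.
Qed.

Lemma ge0_integral_comp_mul_eq (Z Z' : T -> S) (h h' : T -> R) (g : S -> R) :
  measurable_fun setT Z -> measurable_fun setT Z' ->
  measurable_fun setT h -> measurable_fun setT h' ->
  (forall t, 0 <= h t)%R -> (forall t, 0 <= h' t)%R ->
  (forall B, measurable B ->
    \int[mu]_(t in Z @^-1` B) (h t)%:E = \int[mu]_(t in Z' @^-1` B) (h' t)%:E) ->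
  measurable_fun setT g -> (forall s, 0 <= g s)%R ->
  \int[mu]_t (g (Z t) * h t)%:E = \int[mu]_t (g (Z' t) * h' t)%:E.
Proof.
move=> mZ mZ' mh mh' h0 h'0 hh' mg g0.
have mEg : measurable_fun setT (EFin \o g) by exact/measurable_EFinP.
rewrite !(ge0_integral_comp_mul_approx mEg)//; congr (limn _); apply/funext => n.
rewrite !integral_nnsfun_comp_mul//; apply: eq_fsbigr => x _.
by rewrite hh'//; exact: measurable_funPTI.
Qed.

End weighted_law.

Section equal_law.
Context d (T : measurableType d) (R : realType) (mu : {measure set T -> \bar R}).
Context dS (S : measurableType dS).
Variables (Z Z' : T -> S).
Hypotheses (mZ : measurable_fun setT Z) (mZ' : measurable_fun setT Z').
Hypothesis law : forall A, measurable A -> mu (Z' @^-1` A) = mu (Z @^-1` A).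
Local Open Scope ereal_scope.

Lemma ge0_integral_comp_eq_law (g : S -> R) :
  measurable_fun setT g -> (forall s, 0 <= g s)%R ->
  \int[mu]_t (g (Z' t))%:E = \int[mu]_t (g (Z t))%:E.
Proof.
move=> mg g0; have mEg : measurable_fun setT (EFin \o g) by exact/measurable_EFinP.
have push W : measurable_fun setT W ->
    \int[mu]_t (g (W t))%:E = \int[pushforward mu W]_s (g s)%:E.
  move=> mW; rewrite (ge0_integral_pushforward mW mu measurableT mEg).
    by rewrite preimage_setT.
  by move=> s _; rewrite lee_fin.
rewrite (push _ mZ') (push _ mZ).
by apply: eq_measure_integral => A mA _; exact: law.
Qed.

Lemma integrable_comp_eq_law (g : S -> R) : measurable_fun setT g ->
  mu.-integrable setT (EFin \o (g \o Z)) -> mu.-integrable setT (EFin \o (g \o Z')).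
Proof.
move=> mg /integrableP[_ ig]; apply/integrableP; split.
  exact/measurable_EFinP/measurableT_comp.
rewrite (ge0_integral_comp_eq_law (g := Num.norm \o g))//.
- exact: measurableT_comp.
- by move=> s; exact: normr_ge0.
Qed.

Lemma integral_comp_eq_law (g : S -> R) : measurable_fun setT g ->
  mu.-integrable setT (EFin \o (g \o Z)) ->
  \int[mu]_t (g (Z' t))%:E = \int[mu]_t (g (Z t))%:E.
Proof.
move=> mg ig; have ig' := integrable_comp_eq_law mg ig.
rewrite (integral_funrposneg measurableT ig) (integral_funrposneg measurableT ig').
have mgp := measurable_funrpos mg; have mgn := measurable_funrneg mg.
rewrite (ge0_integral_comp_eq_law (g := g^\+%R))//.
by rewrite (ge0_integral_comp_eq_law (g := g^\-%R)).
Qed.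

End equal_law.

Section zero_conditional_mean.
Context d (T : measurableType d) (R : realType) (mu : {measure set T -> \bar R}).
Context dS (S : measurableType dS).
Local Open Scope ereal_scope.

Lemma integral_comp_mul_cond_mean0 (Z : T -> S) (e : T -> R) (u : S -> R) :
  measurable_fun setT Z -> measurable_fun setT e -> measurable_fun setT u ->
  mu.-integrable setT (EFin \o e) ->
  (forall B, measurable B -> \int[mu]_(t in Z @^-1` B) (e t)%:E = 0) ->
  mu.-integrable setT (EFin \o ((u \o Z) \* e)%R) ->
  \int[mu]_t (u (Z t) * e t)%:E = 0.
Proof.
move=> mZ me mu_ ie e0 iue.
have muZ : measurable_fun setT (u \o Z) by exact: measurableT_comp.
have mep := measurable_funrpos me; have men := measurable_funrneg me.
have mup := measurable_funrpos mu_; have mun := measurable_funrneg mu_.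
have e_posneg B : measurable B ->
    \int[mu]_(t in Z @^-1` B) (e^\+%R t)%:E = \int[mu]_(t in Z @^-1` B) (e^\-%R t)%:E.
  move=> mB; have mZB := measurable_preimageT mZ mB.
  have ieB := integrableS measurableT mZB (subsetT _) ie.
  have := integrable_fin_num mZB (integrable_funrpos mZB ieB).
  have := integrable_fin_num mZB (integrable_funrneg mZB ieB).
  move=> fin_n fin_p; apply/eqP.
  by rewrite -[X in _ == X]add0e -sube_eq ?fin_num_adde_defl// -integral_funrposneg// e0.
have iupen := integrable_mul_le (measurable_funrpos muZ) men
  (funrpos_le_norm _) (funrneg_le_norm _) iue.
have iunen := integrable_mul_le (measurable_funrneg muZ) men
  (funrneg_le_norm _) (funrneg_le_norm _) iue.
rewrite (integral_mul_funrposneg (u := u \o Z) (v := e))//.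
rewrite (ge0_integral_comp_mul_eq (Z' := Z) (h := e^\+%R) (h' := e^\-%R) (g := u^\+%R))//.
rewrite [X in _ - _ - X](ge0_integral_comp_mul_eq (Z' := Z) (h := e^\+%R) (h' := e^\-%R)
  (g := u^\-%R))//.
have := integrable_fin_num measurableT iupen.
have := integrable_fin_num measurableT iunen.
set a := \int[mu]_t (u^\+%R (Z t) * e^\-%R t)%:E.
set b := \int[mu]_t (u^\-%R (Z t) * e^\-%R t)%:E.
by move=> fb fa; rewrite [a + b]addeC addeK// subee.
Qed.

End zero_conditional_mean.

Section independence.
Context d (T : measurableType d) (R : realType) (P : probability T R).
Context d1 (S1 : measurableType d1) d2 (S2 : measurableType d2).
Local Open Scope ereal_scope.
Variables (Z1 : T -> S1) (Z2 : T -> S2).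
Hypotheses (mZ1 : measurable_fun setT Z1) (mZ2 : measurable_fun setT Z2).
Hypothesis indep : forall A B, measurable A -> measurable B ->
  P (Z1 @^-1` A `&` Z2 @^-1` B) = P (Z1 @^-1` A) * P (Z2 @^-1` B).

Let integral_cst_EFin D (c : R) : measurable D ->
  \int[P]_(t in D) (cst c t)%:E = c%:E * P D.
Proof. by move=> mD; exact: (integral_cst P mD c%:E). Qed.

(* Transfer twice: along Z2, with weight 1_(Z1^-1 A) against the constant
   P(Z1^-1 A), which is what independence says; then along Z1, with weight
   k o Z2 against the constant E[k o Z2]. *)
Lemma ge0_integral_indep_mul (g : S1 -> R) (k : S2 -> R) :
  measurable_fun setT g -> measurable_fun setT k ->
  (forall s, 0 <= g s)%R -> (forall s, 0 <= k s)%R ->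
  \int[P]_t (k (Z2 t))%:E \is a fin_num ->
  \int[P]_t (g (Z1 t) * k (Z2 t))%:E =
    \int[P]_t (g (Z1 t))%:E * \int[P]_t (k (Z2 t))%:E.
Proof.
move=> mg mk g0 k0 k_fin.
have mZ1A := measurable_preimageT mZ1; have mZ2B := measurable_preimageT mZ2.
have PZ1_fin A : measurable A -> P (Z1 @^-1` A) \is a fin_num.
  by move=> /mZ1A; exact: fin_num_measure.
set K := fine (\int[P]_t (k (Z2 t))%:E).
have indic_mul A : measurable A ->
    \int[P]_t (k (Z2 t) * \1_(Z1 @^-1` A) t)%:E = (K * fine (P (Z1 @^-1` A)))%:E.
  move=> mA; rewrite (@ge0_integral_comp_mul_eq _ _ _ P _ _ Z2 Z2
    (\1_(Z1 @^-1` A)) (cst (fine (P (Z1 @^-1` A)))))//.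
  - under eq_integral do rewrite mulrC EFinM.
    rewrite ge0_integralZl_EFin ?fine_ge0 ?measure_ge0 ?mZ1A//.
    + by rewrite -(fineK k_fin) -EFinM mulrC.
    + by move=> t _; rewrite lee_fin.
    + exact/measurable_EFinP/measurableT_comp.
  - exact/measurable_indic/mZ1A.
  - by move=> t; rewrite fine_ge0// measure_ge0.
  - move=> B mB; rewrite (integral_indic P (mZ2B _ mB) (mZ1A _ mA)).
    rewrite (integral_cst_EFin _ (mZ2B _ mB)) fineK; last exact: PZ1_fin.
    exact: indep.
transitivity (\int[P]_t (g (Z1 t) * cst K t)%:E).
  apply: (@ge0_integral_comp_mul_eq _ _ _ P _ _ Z1 Z1) => //.
  - exact: measurableT_comp.
  - by move=> t; rewrite fine_ge0// integral_ge0// => u _; rewrite lee_fin.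
  - move=> A mA; rewrite integral_mul_indic.
    under eq_integral do rewrite mulrC.
    by rewrite indic_mul// (integral_cst_EFin _ (mZ1A _ mA)) EFinM !fineK ?PZ1_fin.
under eq_integral do rewrite mulrC EFinM.
rewrite ge0_integralZl_EFin ?fine_ge0// ?integral_ge0//.
- by rewrite fineK// muleC.
- by move=> t _; rewrite lee_fin.
- exact/measurable_EFinP/measurableT_comp.
- by move=> t _; rewrite lee_fin.
Qed.

Lemma integrable_indep_mul (g : S1 -> R) (k : S2 -> R) :
  measurable_fun setT g -> measurable_fun setT k ->
  P.-integrable setT (EFin \o (g \o Z1)) -> P.-integrable setT (EFin \o (k \o Z2)) ->
  P.-integrable setT (EFin \o ((g \o Z1) \* (k \o Z2))%R).
Proof.
move=> mg mk /integrableP[_ ig] /integrableP[_ ik]; apply/integrableP; split.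
  by apply/measurable_EFinP/measurable_funM; exact: measurableT_comp.
have gZ_lty : \int[P]_t (`|g (Z1 t)|)%:E < +oo := ig.
have kZ_lty : \int[P]_t (`|k (Z2 t)|)%:E < +oo := ik.
have gZ_ge0 : 0 <= \int[P]_t (`|g (Z1 t)|)%:E by exact: integral_ge0.
have kZ_ge0 : 0 <= \int[P]_t (`|k (Z2 t)|)%:E by exact: integral_ge0.
rewrite (eq_integral (fun t => (`|g (Z1 t)| * `|k (Z2 t)|)%:E)); last first.
  by move=> t _; rewrite -[`|_|]/`|(g (Z1 t) * k (Z2 t))%:E| abse_EFin normrM.
rewrite (ge0_integral_indep_mul (g := Num.norm \o g) (k := Num.norm \o k)) //.
- by apply: lte_mul_pinfty; rewrite ?ge0_fin_numE.
- exact: measurableT_comp.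
- exact: measurableT_comp.
- by move=> s; exact: normr_ge0.
- by move=> s; exact: normr_ge0.
- by rewrite ge0_fin_numE.
Qed.

Lemma integral_indep_mul (g : S1 -> R) (k : S2 -> R) :
  measurable_fun setT g -> measurable_fun setT k ->
  P.-integrable setT (EFin \o (g \o Z1)) -> P.-integrable setT (EFin \o (k \o Z2)) ->
  \int[P]_t (g (Z1 t) * k (Z2 t))%:E =
    \int[P]_t (g (Z1 t))%:E * \int[P]_t (k (Z2 t))%:E.
Proof.
move=> mg mk ig ik.
have fgp := integrable_fin_num measurableT (integrable_funrpos measurableT ig).
have fgn := integrable_fin_num measurableT (integrable_funrneg measurableT ig).
have fkp := integrable_fin_num measurableT (integrable_funrpos measurableT ik).
have fkn := integrable_fin_num measurableT (integrable_funrneg measurableT ik).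
rewrite (integral_mul_funrposneg (u := g \o Z1) (v := k \o Z2)) ?integrable_indep_mul//;
  try exact: measurableT_comp.
have mgp := measurable_funrpos mg; have mgn := measurable_funrneg mg.
have mkp := measurable_funrpos mk; have mkn := measurable_funrneg mk.
rewrite (ge0_integral_indep_mul (g := g^\+%R) (k := k^\+%R))//.
rewrite (ge0_integral_indep_mul (g := g^\-%R) (k := k^\-%R))//.
rewrite (ge0_integral_indep_mul (g := g^\+%R) (k := k^\-%R))//.
rewrite (ge0_integral_indep_mul (g := g^\-%R) (k := k^\+%R))//.
rewrite (integral_funrposneg measurableT ig) (integral_funrposneg measurableT ik).
by rewrite [RHS]fin_num_muleBB.
Qed.

End independence.

Lemma Lfun2P d (T : measurableType d) (R : realType) (mu : {measure set T -> \bar R})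
    (f : T -> R) : measurable_fun setT f ->
  f \in Lfun mu 2%:E <-> (\int[mu]_t (f t ^+ 2)%:E < +oo)%E.
Proof.
move=> mf; split.
  move/Lfun2_integrable_sqr/integrableP => [_ f2].
  rewrite (_ : \int[mu]_t _ = \int[mu]_t `|(f t ^+ 2)%:E|)%E//.
  by apply: eq_integral => t _; rewrite abse_EFin ger0_norm// sqr_ge0.
move=> f2; rewrite inE; apply/andP; split; first by rewrite inE.
rewrite inE /= /finite_norm unlock /=; apply: poweR_lty.
by under eq_integral do rewrite powR_mulrn ?normr_ge0// -normrX ger0_norm ?sqr_ge0//.
Qed.

Section probability.
Context d (T : measurableType d) (R : realType) (P : probability T R).
Local Open Scope ereal_scope.

Lemma Lfun2_Lfun1 (f : T -> R) : f \in Lfun P 2%:E -> f \in Lfun P 1.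
Proof. exact/Lfun_subset12/fin_num_measure. Qed.

Section equal_law_moments.
Context dS (S : measurableType dS) (Z Z' : T -> S).
Hypotheses (mZ : measurable_fun setT Z) (mZ' : measurable_fun setT Z').
Hypothesis law : forall A, measurable A -> P (Z' @^-1` A) = P (Z @^-1` A).

Let sqr_comp_eq_law (g : S -> R) : measurable_fun setT g ->
  \int[P]_t ((g (Z' t)) ^+ 2)%:E = \int[P]_t ((g (Z t)) ^+ 2)%:E.
Proof.
move=> mg; rewrite (ge0_integral_comp_eq_law mZ mZ' law (g := fun s => (g s ^+ 2)%R))//.
- exact: measurable_funX.
- by move=> s; exact: sqr_ge0.
Qed.

Lemma Lfun2_comp_eq_law (g : S -> R) : measurable_fun setT g ->
  g \o Z \in Lfun P 2%:E -> g \o Z' \in Lfun P 2%:E.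
Proof.
by move=> mg; rewrite !Lfun2P ?sqr_comp_eq_law//; exact: measurableT_comp.
Qed.

Lemma expectation_comp_eq_law (g : S -> R) : measurable_fun setT g ->
  g \o Z \in Lfun P 1 -> 'E_P[g \o Z'] = 'E_P[g \o Z].
Proof.
by move=> mg /Lfun1_integrable iZ; rewrite unlock (integral_comp_eq_law mZ mZ').
Qed.

Lemma variance_comp_eq_law (g : S -> R) : measurable_fun setT g ->
  g \o Z \in Lfun P 2%:E -> 'V_P[g \o Z'] = 'V_P[g \o Z].
Proof.
move=> mg gZ2; rewrite !varianceE ?Lfun2_comp_eq_law//.
rewrite expectation_comp_eq_law ?Lfun2_Lfun1//.
by rewrite unlock !exprfctE sqr_comp_eq_law.
Qed.

End equal_law_moments.

Lemma covariance_indep_comp d1 (S1 : measurableType d1) d2 (S2 : measurableType d2)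
    (Z1 : T -> S1) (Z2 : T -> S2) (g : S1 -> R) (k : S2 -> R) :
  measurable_fun setT Z1 -> measurable_fun setT Z2 ->
  (forall A B, measurable A -> measurable B ->
    P (Z1 @^-1` A `&` Z2 @^-1` B) = P (Z1 @^-1` A) * P (Z2 @^-1` B)) ->
  measurable_fun setT g -> measurable_fun setT k ->
  g \o Z1 \in Lfun P 1 -> k \o Z2 \in Lfun P 1 ->
  covariance P (g \o Z1) (k \o Z2) = 0.
Proof.
move=> mZ1 mZ2 indep mg mk /[dup] gZ1 /Lfun1_integrable ig.
move=> /[dup] kZ2 /Lfun1_integrable ik.
rewrite covarianceE//; last exact/Lfun1_integrable/integrable_indep_mul.
rewrite unlock (integral_indep_mul mZ1 mZ2 indep)// subee// fin_numM//.
- exact: (integrable_fin_num measurableT ig).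
- exact: (integrable_fin_num measurableT ik).
Qed.

Lemma covariance_comp_cond_mean0 dS (S : measurableType dS) (Z : T -> S)
    (e : T -> R) (u : S -> R) :
  measurable_fun setT Z -> measurable_fun setT e -> measurable_fun setT u ->
  (forall B, measurable B -> \int[P]_(t in Z @^-1` B) (e t)%:E = 0) ->
  u \o Z \in Lfun P 1 -> e \in Lfun P 1 -> ((u \o Z) \* e)%R \in Lfun P 1 ->
  covariance P (u \o Z) e = 0.
Proof.
move=> mZ me mu e0 uZ1 e1 uZe1; rewrite covarianceE//.
have -> : 'E_P[e] = 0 by rewrite unlock -(preimage_setT Z) e0.
rewrite mule0 sube0 unlock (integral_comp_mul_cond_mean0 mZ me mu)//.
- exact/Lfun1_integrable.
- exact/Lfun1_integrable.
Qed.

Lemma resample_excess_sqr_error (A A' e : T -> R) :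
  A \in Lfun P 2%:E -> A' \in Lfun P 2%:E -> e \in Lfun P 2%:E ->
  'E_P[A'] = 'E_P[A] -> 'V_P[A'] = 'V_P[A] -> 'E_P[e] = 0 ->
  covariance P A' A = 0 -> covariance P A' e = 0 -> covariance P A e = 0 ->
  'E_P[((A \- A' \+ e) ^+ 2)%R] - 'E_P[e ^+ 2] = 2%:E * 'V_P[A].
Proof.
move=> A2 A'2 e2 EA' VA' Ee cA'A cA'e cAe.
have centered_sqr X : X \in Lfun P 2%:E -> 'E_P[X] = 0 -> 'E_P[X ^+ 2] = 'V_P[X].
  by move=> X2 X0; rewrite varianceE// X0 expe2 mule0 sube0.
have AA'2 : (A \- A')%R \in Lfun P 2%:E by rewrite rpredB ?lee1n.
have D2 : (A \- A' \+ e)%R \in Lfun P 2%:E by rewrite rpredD ?lee1n.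
have ED : 'E_P[(A \- A' \+ e)%R] = 0.
  rewrite expectationD ?expectationB ?rpredB ?Lfun2_Lfun1// EA' Ee adde0 subee//.
  exact/expectation_fin_num/Lfun2_Lfun1.
rewrite !centered_sqr// varianceD// varianceB// covarianceBl//.
rewrite VA' (covarianceC _ A) cA'A cAe cA'e subee// !mule0 !sube0 adde0 addeK.
  by have /fineK <- := variance_fin_num A2; rewrite -EFinD -EFinM; congr EFin; ring.
exact: variance_fin_num.
Qed.

End probability.

Lemma grouped_importance_additive (R : realType) d (T : measurableType d)
    (P : probability T R) (p : nat) (J : {set 'I_p})
    (X X' : T -> p.-tuple R) (Y eps : T -> R)
    (fJ : #|J|.-tuple R -> R) (fJb : #|~: J|.-tuple R -> R) :
  (forall t, Y t = fJ (restr J (X t)) + fJb (restr (~: J) (X t)) + eps t) ->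
  grouped_importance P J (fun x => fJ (restr J x) + fJb (restr (~: J) x)) X X' Y =
  ('E_P[(((fun t => fJ (restr J (X t))) \- (fun t => fJ (restr J (X' t))) \+ eps)
     ^+ 2)%R] - 'E_P[(eps ^+ 2)%R])%E.
Proof.
move=> model; rewrite /grouped_importance unlock; congr (_ - _)%E.
  apply: eq_integral => t _; rewrite exprfctE /= restr_replace restrC_replace.
  by rewrite model; congr EFin; ring.
by apply: eq_integral => t _; rewrite exprfctE /= model; congr EFin; ring.
Qed.

Theorem proposition1 (R : realType) (d : measure_display) (T : measurableType d)
  (P : probability T R) (p : nat) (J : {set 'I_p})
  (X X' : T -> p.-tuple R) (Y eps : T -> R)
  (fJ : #|J|.-tuple R -> R) (fJb : #|~: J|.-tuple R -> R) :
  measurable_fun setT X ->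
  measurable_fun setT X' ->
  measurable_fun setT eps ->
  measurable_fun setT fJ ->
  measurable_fun setT fJb ->
  (forall t, Y t = fJ (restr J (X t)) + fJb (restr (~: J) (X t)) + eps t) ->
  (\int[P]_t ((fJ (restr J (X t))) ^+ 2)%:E < +oo)%E ->
  (\int[P]_t ((fJb (restr (~: J) (X t))) ^+ 2)%:E < +oo)%E ->
  (* E[eps | X] = 0 *)
  P.-integrable setT (EFin \o eps) ->
  (forall B : set (p.-tuple R), measurable B ->
     (\int[P]_(t in X @^-1` B) (eps t)%:E = 0)%E) ->
  (\int[P]_t ((eps t) ^+ 2)%:E < +oo)%E ->
  (* X'_J has the same distribution as X_J *)
  (forall A : set (#|J|.-tuple R), measurable A ->
     P ((fun t => restr J (X' t)) @^-1` A) = P ((fun t => restr J (X t)) @^-1` A)) ->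
  (* X'_J is independent of (X, Y) *)
  (forall (A : set (#|J|.-tuple R)) (B : set (p.-tuple R * R)),
     measurable A -> measurable B ->
     P ((fun t => restr J (X' t)) @^-1` A `&` (fun t => (X t, Y t)) @^-1` B)
     = (P ((fun t => restr J (X' t)) @^-1` A) * P ((fun t => (X t, Y t)) @^-1` B))%E) ->
  grouped_importance P J
    (fun x => fJ (restr J x) + fJb (restr (~: J) x)) X X' Y
  = (2%:E * 'V_P[fun t => fJ (restr J (X t))])%E.
Proof.
move=> mX mX' meps mfJ mfJb model fJ2 _ _ ceps eps2 law indep.
have mfJr := measurableT_comp mfJ (@measurable_restr R _ J).
have mfJbr := measurableT_comp mfJb (@measurable_restr R _ (~: J)).
have mXJ := measurableT_comp (@measurable_restr R _ J) mX.
have mX'J := measurableT_comp (@measurable_restr R _ J) mX'.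
have mY : measurable_fun setT Y.
  rewrite (funext model); apply: measurable_funD => //.
  by apply: measurable_funD; [exact: measurableT_comp mfJr mX|
                             exact: measurableT_comp mfJbr mX].
have mXY := measurable_fun_pair mX mY.
pose err z := z.2 - fJ (restr J z.1) - fJb (restr (~: J) z.1).
have epsE : eps = err \o (fun t => (X t, Y t)).
  by apply/funext => t; rewrite /err /= model; ring.
have merr : measurable_fun setT err.
  apply: measurable_funB; last exact: measurableT_comp mfJbr measurable_fst.
  by apply: measurable_funB => //; exact: measurableT_comp mfJr measurable_fst.
pose A t := fJ (restr J (X t)); pose A' t := fJ (restr J (X' t)).
have A2 : A \in Lfun P 2%:E by apply/Lfun2P => //; exact: measurableT_comp.
have A'2 : A' \in Lfun P 2%:E := Lfun2_comp_eq_law mXJ mX'J law mfJ A2.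
have e2 : eps \in Lfun P 2%:E by apply/Lfun2P.
rewrite (grouped_importance_additive _ _ model); apply: resample_excess_sqr_error => //.
- exact: (expectation_comp_eq_law mXJ mX'J law mfJ (Lfun2_Lfun1 A2)).
- exact: (variance_comp_eq_law mXJ mX'J law mfJ A2).
- by rewrite unlock -(preimage_setT X) ceps.
- apply: (covariance_indep_comp (k := fun z => fJ (restr J z.1)) mX'J mXY indep mfJ).
  + exact: measurableT_comp mfJr measurable_fst.
  + exact: Lfun2_Lfun1.
  + exact: Lfun2_Lfun1.
- rewrite [in covariance _ _ eps]epsE.
  apply: (covariance_indep_comp mX'J mXY indep mfJ merr); rewrite -?epsE;
    exact: Lfun2_Lfun1.
- apply: (covariance_comp_cond_mean0 mX meps mfJr ceps);
    [exact: Lfun2_Lfun1|exact: Lfun2_Lfun1|exact: Lfun2_mul_Lfun1].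
Qed.
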